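(* Every commutative, pseudo Connes amenable dual Banach algebra is weakly Connes amenable.
   Context: A dual Banach algebra is a Banach algebra $\mathfrak{A}$ which is the dual of a Banach space $\mathfrak{A}_*$ and whose multiplication is separately $w^*$-continuous. For a Banach $\mathfrak{A}$-bimodule $E$, $\sigma wc(E)$ is the set of $x\in E$ such that $a\mapsto a\cdot x$, $a\mapsto x\cdot a$ are continuous from $(\mathfrak{A},w^* )$ to $(E,\sigma(E,E^* ))$. Let $\pi:\mathfrak{A}\hat\otimes\mathfrak{A}\to\mathfrak{A}$, $\pi(a\otimes b)=ab$; since $\pi^*(\mathfrak{A}_* )\subseteq\sigma wc((\mathfrak{A}\hat\otimes\mathfrak{A})^* )$, taking adjoints gives $\pi_{\sigma wc}:\sigma wc((\mathfrak{A}\hat\otimes\mathfrak{A})^* )^*\to\mathfrak{A}$ extending $\pi$. Let $\zeta:\mathfrak{A}\hat\otimes\mathfrak{A}\to\sigma wc((\mathfrak{A}\hat\otimes\mathfrak{A})^* )^*$ be the canonical embedding into the bidual followed by restriction. $\mathfrak{A}$ is pseudo Connes amenable if there is a net $(m_\alpha)$ in $\mathfrak{A}\hat\otimes\mathfrak{A}$ with $a\cdot\zeta(m_\alpha)-\zeta(m_\alpha)\cdot a\to0$ ($w^*$) and $a\pi_{\sigma wc}(m_\alpha)\to a$ ($w^*$) for all $a\in\mathfrak{A}$. A derivation $D:\mathfrak{A}\to F$ is a continuous linear map with $D(ab)=D(a)\cdot b+a\cdot D(b)$; inner if $D(a)=a\cdot x-x\cdot a$ for some $x\in F$. Let $j_{\mathfrak{A}}:\mathfrak{A}^*\to\sigma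 wc(\mathfrak{A})^*$ be the adjoint of the inclusion $\sigma wc(\mathfrak{A})\hookrightarrow\mathfrak{A}$. $\mathfrak{A}$ is weakly Connes amenable if for every derivation $D:\mathfrak{A}\to\mathfrak{A}^*$ such that $j_{\mathfrak{A}}\circ D:\mathfrak{A}\to\sigma wc(\mathfrak{A})^*$ is $w^*$-$w^*$ continuous, $j_{\mathfrak{A}}\circ D$ is inner. *)

From mathcomp Require Import all_boot all_order all_algebra.
From mathcomp Require Import all_classical all_reals all_analysis.
From mathcomp Require Import complex.
Import numFieldNormedType.Exports.
Import GRing.Theory Num.Theory.

Set Implicit Arguments.
Unset Strict Implicit.
Unset Printing Implicit Defensive.

Local Open Scope ring_scope.
Local Open Scope complex_scope.

Section Defs.
Variable R : realType.
Local Notation K := R[i].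

Definition directed (I : Type) (le : I -> I -> Prop) : Prop :=
  [/\ inhabited I, (forall i, le i i),
      (forall i j k, le i j -> le j k -> le i k) &
      (forall i j, exists k, le i k /\ le j k)].

Definition net_conv (I : Type) (le : I -> I -> Prop) (u : I -> K) (l : K) : Prop :=
  forall e : K, 0 < e -> exists i0, forall i, le i0 i -> `|u i - l| < e.

Definition bdd_lin_fun (V : normedModType K) (f : V -> K) : Prop :=
  (forall (k : K) (x y : V), f (k *: x + y) = k * f x + f y) /\
  exists C : K, forall x, `|f x| <= C * `|x|.

Section Algebra.
Variables (A P : completeNormedModType K).

Definition banach_algebra (mul : A -> A -> A) : Prop :=
  [/\ (forall a b c, mul (mul a b) c = mul a (mul b c)),
      (forall (k : K) a b c, mul (k *: a + b) c = k *: mul a c + mul b c),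
      (forall (k : K) a b c, mul c (k *: a + b) = k *: mul c a + mul c b) &
      (forall a b, `|mul a b| <= `|a| * `|b|)].

Variable pr : A -> P -> K.

(* pr identifies A isometrically with the dual (P)^* of the Banach space P:
   pr a is a linear functional on P of norm ||a||, and every bounded linear
   functional on P is of the form pr a. *)
Definition is_predual : Prop :=
  [/\ (forall (k : K) a b p, pr (k *: a + b) p = k * pr a p + pr b p),
      (forall (k : K) a p q, pr a (k *: p + q) = k * pr a p + pr a q),
      (forall a p, `|pr a p| <= `|a| * `|p|),
      (forall a (e : K), 0 < e -> exists p, `|p| <= 1 /\ `|a| - e < `|pr a p|) &
      (forall f : P -> K, bdd_lin_fun f -> exists a, forall p, pr a p = f p)].

(* w*-convergence (topology sigma(A, A_* )) of a net in A *)
Definition wconv (I : Type) (le : I -> I -> Prop) (x : I -> A) (a : A) : Prop :=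
  forall p : P, net_conv le (fun i => pr (x i) p) (pr a p).

Definition wstar_cont (f : A -> A) : Prop :=
  forall (I : Type) (le : I -> I -> Prop) (x : I -> A) (a : A),
    directed le -> wconv le x a -> wconv le (fun i => f (x i)) (f a).

Variable mul : A -> A -> A.

Definition dual_banach_algebra : Prop :=
  [/\ banach_algebra mul, is_predual &
      forall a, wstar_cont (mul a) /\ wstar_cont (fun b => mul b a)].

Definition commutative_alg : Prop := forall a b, mul a b = mul b a.

(* x in sigma wc(A) iff a |-> a x and a |-> x a are continuous from (A, w* )
   to (A, sigma(A, A^* )). *)
Definition sigmawcA (x : A) : Prop :=
  forall (I : Type) (le : I -> I -> Prop) (u : I -> A) (a : A),
    directed le -> wconv le u a ->
    forall phi : A -> K, bdd_lin_fun phi ->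
      net_conv le (fun i => phi (mul (u i) x)) (phi (mul a x)) /\
      net_conv le (fun i => phi (mul x (u i))) (phi (mul x a)).

(* D a is the functional D(a) in A^*; the dual module actions are
   (a . f)(x) = f (x a) and (f . a)(x) = f (a x). *)
Definition derivation_to_dual (D : A -> A -> K) : Prop :=
  [/\ (forall a, bdd_lin_fun (D a)),
      (forall (k : K) a b x, D (k *: a + b) x = k * D a x + D b x),
      (exists C : K, forall a x, `|D a x| <= C * `|a| * `|x|) &
      (forall a b x, D (mul a b) x = D a (mul b x) + D b (mul x a))].

(* j_A o D : A -> sigma wc(A)^* is w*-w* continuous *)
Definition jD_wstar_cont (D : A -> A -> K) : Prop :=
  forall (I : Type) (le : I -> I -> Prop) (u : I -> A) (a : A),
    directed le -> wconv le u a ->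
    forall x, sigmawcA x -> net_conv le (fun i => D (u i) x) (D a x).

(* j_A o D is inner: there is psi in sigma wc(A)^* (a bounded linear functional
   on the closed subspace sigma wc(A)) with
   j_A(D a) = a . psi - psi . a, i.e. D a x = psi (x a) - psi (a x). *)
Definition jD_inner (D : A -> A -> K) : Prop :=
  exists psi : A -> K,
    [/\ (forall (k : K) x y, sigmawcA x -> sigmawcA y ->
           psi (k *: x + y) = k * psi x + psi y),
        (exists C : K, forall x, sigmawcA x -> `|psi x| <= C * `|x|) &
        (forall a x, sigmawcA x -> D a x = psi (mul x a) - psi (mul a x))].

Definition weakly_connes_amenable : Prop :=
  forall D : A -> A -> K,
    derivation_to_dual D -> jD_wstar_cont D -> jD_inner D.

(* (A ⊗^ A)^* is (isometrically) the space of bounded bilinear forms on A x A;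
   F is bounded by M iff |F b c| <= M ||b|| ||c||. *)
Definition bilin_bounded_by (F : A -> A -> K) (M : K) : Prop :=
  forall b c, `|F b c| <= M * `|b| * `|c|.

Definition bdd_bilin (F : A -> A -> K) : Prop :=
  [/\ (forall (k : K) a b c, F (k *: a + b) c = k * F a c + F b c),
      (forall (k : K) a b c, F c (k *: a + b) = k * F c a + F c b) &
      exists M, bilin_bounded_by F M].

(* bimodule actions on (A ⊗^ A)^*, dual to a.(b⊗c) = ab⊗c, (b⊗c).a = b⊗ca *)
Definition lact_E (a : A) (F : A -> A -> K) : A -> A -> K := fun b c => F b (mul c a).
Definition ract_E (F : A -> A -> K) (a : A) : A -> A -> K := fun b c => F (mul a b) c.

(* elements of ((A ⊗^ A)^* )^* : bounded linear functionals on the Banach space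
   of bounded bilinear forms (with its norm ||F|| = inf of the bounds M) *)
Definition bdd_lin_funE (Phi : (A -> A -> K) -> K) : Prop :=
  (forall (k : K) F G, bdd_bilin F -> bdd_bilin G ->
      Phi (fun b c => k * F b c + G b c) = k * Phi F + Phi G) /\
  exists C : K, 0 <= C /\
    forall F M, bdd_bilin F -> bilin_bounded_by F M -> `|Phi F| <= C * M.

Definition sigmawcE (F : A -> A -> K) : Prop :=
  bdd_bilin F /\
  forall (I : Type) (le : I -> I -> Prop) (u : I -> A) (a : A),
    directed le -> wconv le u a ->
    forall Phi, bdd_lin_funE Phi ->
      net_conv le (fun i => Phi (lact_E (u i) F)) (Phi (lact_E a F)) /\
      net_conv le (fun i => Phi (ract_E F (u i))) (Phi (ract_E F a)).

(* an element m = sum_n x_n ⊗ y_n of the projective tensor product, with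
   sum_n ||x_n|| ||y_n|| < oo *)
Definition proj_tensor (x y : nat -> A) : Prop :=
  cvgn (series ((fun n => `|x n| * `|y n|) : nat -> K^o)).

Definition tpair (F : A -> A -> K) (x y : nat -> A) : K :=
  limn (series ((fun n => F (x n) (y n)) : nat -> K^o)).

Definition tpi (x y : nat -> A) : A :=
  limn (series (fun n => mul (x n) (y n))).

(* pseudo Connes amenability: a net (m_i) in A ⊗^ A with
   a . zeta(m_i) - zeta(m_i) . a -> 0 (w* in sigma wc((A⊗^A)^* )^* ) and
   a pi_{sigma wc}(zeta(m_i)) = a pi(m_i) -> a (w* in A).
   Here <a . zeta(m) - zeta(m) . a, F> = <F, a.m> - <F, m.a>, where
   a.(sum x_n⊗y_n) = sum (a x_n)⊗y_n and (sum x_n⊗y_n).a = sum x_n⊗(y_n a). *)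
Definition pseudo_connes_amenable : Prop :=
  exists (I : Type) (le : I -> I -> Prop) (x y : I -> nat -> A),
    [/\ directed le,
        (forall i, proj_tensor (x i) (y i)),
        (forall (a : A) (F : A -> A -> K), sigmawcE F ->
           net_conv le (fun i => tpair F (fun n => mul a (x i n)) (y i)
                               - tpair F (x i) (fun n => mul (y i n) a)) 0) &
        (forall a : A, wconv le (fun i => mul a (tpi (x i) (y i))) a)].

End Algebra.
End Defs.

From mathcomp Require Import all_boot all_order all_algebra.
From mathcomp Require Import all_classical all_reals all_analysis.
From mathcomp Require Import complex.
From mathcomp Require Import ring.
Import numFieldNormedType.Exports.
Import Order.TTheory GRing.Theory Num.Theory.
Local Open Scope ring_scope.
Local Open Scope complex_scope.

Set Implicit Arguments.
Unset Strict Implicit.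
Unset Printing Implicit Defensive.

(* We show that j_A o D vanishes, so that it is inner with psi = 0.  Fix x in
   sigma wc(A).  Since A is commutative, sigma wc(A) is an ideal, and the
   bilinear form F_x(b, c) = D b (c x) lies in sigma wc((A ⊗ A)^* ): for the
   right action, the derivation rule splits F_x . w into F_(x w) plus the form
   (b, c) |-> D w (b c x), and the latter is pr (b c) q for some q in A_*
   because v |-> D w (v x) is w*-continuous.  The derivation rule also gives
   <F_x, a.m - m.a> = D a (pi(m) x), so pseudo Connes amenability yields
   D a (pi(m_i) x) -> 0.  As c pi(m_i) -> c and b pi(m_i) -> b weak*, the
   w*-continuity of v |-> D b (v x) and of j_A o D then give first
   D b (c x) = 0 and then D b x = 0. *)

Section ComplexScalars.
Variable R : realType.
Local Notation K := R[i].

Section Nets.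
Variables (I : Type) (le : I -> I -> Prop).

Lemma eq_net_conv (u v : I -> K) l : u =1 v -> net_conv le u l -> net_conv le v l.
Proof. by move=> uv ul e /ul[i0 ul_i0]; exists i0 => i /ul_i0; rewrite uv. Qed.

Hypothesis le_directed : directed le.

Lemma net_conv_cst (c : K) : net_conv le (fun=> c) c.
Proof.
by case: le_directed => -[i0] _ _ _ e e_gt0; exists i0 => i _; rewrite subrr normr0.
Qed.

Lemma net_convD (u v : I -> K) l1 l2 :
  net_conv le u l1 -> net_conv le v l2 -> net_conv le (fun i => u i + v i) (l1 + l2).
Proof.
case: le_directed => _ _ le_trans' le_ub ul1 vl2 e e_gt0.
have e2_gt0 : 0 < e / 2 by rewrite divr_gt0.
have [[i1 ul1_i1] [i2 vl2_i2]] := (ul1 _ e2_gt0, vl2 _ e2_gt0).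
have [k [i1k i2k]] := le_ub i1 i2; exists k => i ki.
have -> : u i + v i - (l1 + l2) = (u i - l1) + (v i - l2) by ring.
rewrite (le_lt_trans (ler_normD _ _)) // [ltRHS]splitr.
by apply: ltrD; [apply/ul1_i1/le_trans'/ki | apply/vl2_i2/le_trans'/ki].
Qed.

Lemma net_conv_unique (u : I -> K) l1 l2 :
  net_conv le u l1 -> net_conv le u l2 -> l1 = l2.
Proof.
move=> ul1 ul2; apply/eqP/negPn/negP => l12_neq.
have e_gt0 : 0 < `|l1 - l2| / 2 by rewrite divr_gt0 // normr_gt0 subr_eq0.
have [[i1 ul1_i1] [i2 ul2_i2]] := (ul1 _ e_gt0, ul2 _ e_gt0).
case: le_directed => _ _ _ /(_ i1 i2)[k [/ul1_i1 uk1 /ul2_i2 uk2]].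
suff : `|l1 - l2| < `|l1 - l2| / 2 + `|l1 - l2| / 2 by rewrite -splitr ltxx.
apply: (le_lt_trans (y := `|u k - l2| + `|u k - l1|)); last exact: ltrD.
have -> : l1 - l2 = (u k - l2) - (u k - l1) by ring.
exact: ler_normB.
Qed.

End Nets.

Lemma exists_invSn_lt (e : K) : 0 < e -> exists n : nat, (n.+1%:R : K)^-1 < e.
Proof.
move=> e_gt0; have eRe : e = (complex.Re e)%:C by rewrite RRe_real ?gtr0_real.
have Re_gt0 : 0 < complex.Re e by rewrite -ltcR rmorph0 -eRe.
set n := Num.Def.archi_bound (complex.Re e)^-1; exists n.
have -> : (n.+1%:R : K)^-1 = ((n.+1%:R : R)^-1)%:C by rewrite fmorphV rmorph_nat.
rewrite eRe ltcR invf_plt ?posrE ?ltr0Sn //.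
by apply: lt_trans (archi_boundP _) _; rewrite ?invr_ge0 ?ltW ?ltr_nat.
Qed.

Lemma ler_normM_bound (C y z : K) : 0 <= y -> 0 <= z -> y <= C * z -> y <= `|C| * z.
Proof.
move=> y_ge0 z_ge0 yCz; have Cz_ge0 : 0 <= C * z := le_trans y_ge0 yCz.
by rewrite -(ger0_norm z_ge0) -normrM ger0_norm.
Qed.

Lemma mulr_divDr1_lt (c e : K) : 0 <= c -> 0 < e -> c * (e / (c + 1)) < e.
Proof.
move=> c_ge0 e_gt0; have c1_gt0 : 0 < c + 1 by rewrite ltr_wpDl.
by rewrite mulrA ltr_pdivrMr // mulrDr mulr1 mulrC ltrDl.
Qed.

Section ScalarLinear.
Variable V : lmodType K.

Definition scalar_linear (f : V -> K) :=
  forall (k : K) x y, f (k *: x + y) = k * f x + f y.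

Variable f : V -> K.
Hypothesis f_lin : scalar_linear f.

Lemma scalar_linear0 : f 0 = 0.
Proof.
have := f_lin 1 0 0; rewrite scaler0 addr0 mul1r => /(congr1 (fun y => y - f 0)).
by rewrite subrr addrK => ->.
Qed.

Lemma scalar_linearD x y : f (x + y) = f x + f y.
Proof. by rewrite -[x]scale1r f_lin mul1r scale1r. Qed.

Lemma scalar_linearZ k x : f (k *: x) = k * f x.
Proof. by rewrite -[k *: x]addr0 f_lin scalar_linear0 addr0. Qed.

Lemma scalar_linearB x y : f (x - y) = f x - f y.
Proof. by rewrite scalar_linearD -scaleN1r scalar_linearZ mulN1r. Qed.

Lemma scalar_linear_series (u : nat -> V) n :
  f (series u n) = series ((fun k => f (u k)) : nat -> K^o) n.
Proof.
rewrite /series /=; elim: n => [|n IHn]; first by rewrite !big_geq // scalar_linear0.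
by rewrite !big_nat_recr //= scalar_linearD IHn.
Qed.

End ScalarLinear.

Section BoundedFunctionals.
Variable V : normedModType K.

Lemma bdd_lin_fun_norm_bound (f : V -> K) :
  bdd_lin_fun f -> exists C, 0 <= C /\ forall x, `|f x| <= C * `|x|.
Proof.
case=> _ [C fC]; exists `|C|; split => // x.
exact: ler_normM_bound (fC x).
Qed.

Lemma bdd_lin_fun_cvg (f : V -> K) (s : nat -> V) (l : V) : bdd_lin_fun f ->
  (s @ \oo --> l)%classic -> ((fun n => f (s n) : K^o) @ \oo --> (f l : K^o))%classic.
Proof.
move=> f_bdd /cvgrPdist_lt sl; apply/cvgrPdist_lt => e e_gt0.
have [C [C_ge0 fC]] := bdd_lin_fun_norm_bound f_bdd.
have C1_gt0 : 0 < C + 1 by rewrite ltr_wpDl.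
apply: filterS (sl _ (divr_gt0 e_gt0 C1_gt0)) => n sn_near.
rewrite -(scalar_linearB (proj1 f_bdd)) (le_lt_trans (fC _)) //.
by apply: le_lt_trans (mulr_divDr1_lt C_ge0 e_gt0); apply: ler_wpM2l => //; exact: ltW.
Qed.

End BoundedFunctionals.

Section Series.
Variable V : completeNormedModType K.

Lemma series_cvg_dominated (u : nat -> V) (v : nat -> K^o) (c : K) :
  0 <= c -> cvgn (series v) -> (forall n, `|u n| <= c * v n) -> cvgn (series u).
Proof.
move=> c_ge0 /cvg_cauchy/cauchy_seriesP v_cauchy uv.
apply/cauchy_cvgP/cauchy_seriesP => e e_gt0.
have c1_gt0 : 0 < c + 1 by rewrite ltr_wpDl.
apply: filterS (v_cauchy _ (divr_gt0 e_gt0 c1_gt0)) => n v_small.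
apply: le_lt_trans (ler_norm_sum _ _ _) _.
apply: le_lt_trans (ler_sum _ (fun k _ => uv k)) _.
have sum_ge0 : 0 <= c * \sum_(n.1 <= k < n.2) v k.
  by rewrite mulr_sumr; apply: sumr_ge0 => k _; apply: le_trans (uv k).
rewrite -mulr_sumr -(ger0_norm sum_ge0) normrM (ger0_norm c_ge0).
by apply: le_lt_trans (mulr_divDr1_lt c_ge0 e_gt0); apply: ler_wpM2l => //; exact: ltW.
Qed.

(* R[i] carries no complete normed module instance, so absolutely convergent
   scalar series are sent into V along k |-> k *: a0 and brought back by f. *)
Lemma scalar_series_cvg_dominated (f : V -> K) (a0 : V) (u v : nat -> K^o) (c : K) :
  bdd_lin_fun f -> f a0 = 1 -> 0 <= c -> cvgn (series v) ->
  (forall n, `|u n| <= c * v n) -> cvgn (series u).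
Proof.
move=> f_bdd fa0 c_ge0 v_cvg uv.
have ua0_cvg : cvgn (series (fun n => u n *: a0)).
  apply: (series_cvg_dominated (c := c * `|a0|) _ v_cvg) => [|n].
    exact: mulr_ge0.
  by rewrite normrZ mulrAC ler_wpM2r.
have -> : series u = (fun n => f (series (fun k => u k *: a0) n)).
  apply/funext => n; rewrite (scalar_linear_series (proj1 f_bdd)); congr (series _ n).
  by apply/funext => k; rewrite /= (scalar_linearZ (proj1 f_bdd)) fa0 mulr1.
exact: cvgP (bdd_lin_fun_cvg f_bdd ua0_cvg).
Qed.

End Series.

End ComplexScalars.

Lemma subset_leq_directed (T : eqType) :
  directed (fun i j : seq T * nat => {subset i.1 <= j.1} /\ (i.2 <= j.2)%N).
Proof.
split=> [|i|i j k [ij1 ij2] [jk1 jk2]|i j].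
- exact: inhabits ([::], 0%N).
- by split.
- by split=> [x /ij1 /jk1|]; last exact: leq_trans jk2.
- exists (i.1 ++ j.1, maxn i.2 j.2); do 2?split => /=.
  + by move=> x xi; rewrite mem_cat xi.
  + exact: leq_maxl.
  + by move=> x xj; rewrite mem_cat xj orbT.
  + exact: leq_maxr.
Qed.

Section DualBanachAlgebra.
Variable R : realType.
Local Notation K := R[i].
Variables (A P : completeNormedModType K) (pr : A -> P -> K) (mul : A -> A -> A).
Hypothesis mulP : banach_algebra mul.
Hypothesis prP : is_predual pr.
Hypothesis mulC : commutative_alg mul.

Lemma mulA a b c : mul (mul a b) c = mul a (mul b c).
Proof. by case: mulP. Qed.

Lemma mulCA a b c : mul a (mul b c) = mul b (mul a c).
Proof. by rewrite -!mulA (mulC a b). Qed.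

Lemma mulAC a b c : mul (mul a b) c = mul (mul a c) b.
Proof. by rewrite !mulA (mulC b c). Qed.

Lemma mul_linl (k : K) a b c : mul (k *: a + b) c = k *: mul a c + mul b c.
Proof. by case: mulP. Qed.

Lemma mul_linr (k : K) a b c : mul c (k *: a + b) = k *: mul c a + mul c b.
Proof. by case: mulP. Qed.

Lemma norm_mul_le a b : `|mul a b| <= `|a| * `|b|.
Proof. by case: mulP. Qed.

Lemma pr_linl (k : K) a b p : pr (k *: a + b) p = k * pr a p + pr b p.
Proof. by case: prP. Qed.

Lemma pr_linr a : scalar_linear (pr a).
Proof. by case: prP => _ pr_lin _ _ _ k p q; apply: pr_lin. Qed.

Lemma norm_pr_le a p : `|pr a p| <= `|a| * `|p|.
Proof. by case: prP. Qed.

Lemma pr0l p : pr 0 p = 0.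
Proof. exact: (scalar_linear0 (fun k a b => pr_linl k a b p)). Qed.

Lemma prZl k a p : pr (k *: a) p = k * pr a p.
Proof. exact: (scalar_linearZ (fun k a b => pr_linl k a b p)). Qed.

Lemma prBl a b p : pr (a - b) p = pr a p - pr b p.
Proof. exact: (scalar_linearB (fun k a b => pr_linl k a b p)). Qed.

Lemma bdd_lin_fun_mul (phi : A -> K) c :
  bdd_lin_fun phi -> bdd_lin_fun (fun v => phi (mul c v)).
Proof.
move=> phi_bdd; have [C [C_ge0 phiC]] := bdd_lin_fun_norm_bound phi_bdd.
split=> [k x y|]; first by rewrite mul_linr (proj1 phi_bdd).
exists (C * `|c|) => x; apply: le_trans (phiC _) _.
by rewrite -mulrA ler_wpM2l // norm_mul_le.
Qed.

Lemma sigmawcA_mul c x : sigmawcA pr mul x -> sigmawcA pr mul (mul c x).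
Proof.
move=> x_wc I le u a le_directed ua phi phi_bdd.
have [ux_cvg xu_cvg] := x_wc I le u a le_directed ua _ (bdd_lin_fun_mul c phi_bdd).
split.
  by rewrite mulCA; apply: eq_net_conv ux_cvg => i /=; rewrite mulCA.
by rewrite mulA; apply: eq_net_conv xu_cvg => i /=; rewrite mulA.
Qed.

Definition wstar_continuous_functional (psi : A -> K) :=
  forall (I : Type) (le : I -> I -> Prop) (u : I -> A) (a : A),
    directed le -> wconv pr le u a -> net_conv le (fun i => psi (u i)) (psi a).

Lemma predual_rep_of_kernel (L : seq P) (psi : A -> K) : scalar_linear psi ->
  (forall a, (forall p, p \in L -> pr a p = 0) -> psi a = 0) ->
  exists q, forall a, psi a = pr a q.
Proof.
elim: L psi => [|p L IHL] psi psi_lin psi_ker.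
  exists 0 => a; rewrite (scalar_linear0 (pr_linr a)).
  by apply: psi_ker => p; rewrite in_nil.
have [[a0 [a0_L a0_p]]|] :=
  pselect (exists a0, (forall p', p' \in L -> pr a0 p' = 0) /\ pr a0 p != 0).
  pose c := psi a0 / pr a0 p.
  have psi'_lin : scalar_linear (fun a => psi a - c * pr a p).
    by move=> k x y; rewrite psi_lin pr_linl; ring.
  have [q' psi'_q'] : exists q', forall a, psi a - c * pr a p = pr a q'.
    apply: (IHL _ psi'_lin) => b b_L; pose t := pr b p / pr a0 p.
    have : psi (b - t *: a0) = 0.
      apply: psi_ker => p'; rewrite inE => /orP[/eqP ->|p'_L].
        by rewrite prBl prZl /t divfK // subrr.
      by rewrite prBl prZl b_L // a0_L // mulr0 subrr.
    rewrite (scalar_linearB psi_lin) (scalar_linearZ psi_lin) => /subr0_eq ->.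
    by rewrite /t /c mulrAC -mulrA mulrC subrr.
  by exists (q' + c *: p) => a; rewrite addrC (pr_linr a) -psi'_q'; ring.
move=> no_a0; apply: (IHL _ psi_lin) => a a_L; apply: psi_ker => p'.
rewrite inE => /orP[/eqP ->|]; last exact: a_L.
by apply: contrapT => /eqP a_p; apply: no_a0; exists a.
Qed.

(* Weak*-continuity at 0, tested on the net of near-annihilators of finite
   subsets of A_*, gives a basic weak* neighbourhood on which |psi| < 1. *)
Lemma wstar_continuous_local_bound psi : scalar_linear psi ->
  wstar_continuous_functional psi ->
  exists (L : seq P) (n : nat), forall a,
    (forall p, p \in L -> `|pr a p| < (n.+1%:R : K)^-1) -> `|psi a| < 1.
Proof.
move=> psi_lin psi_cont; apply: contrapT => no_bound.
have bad (i : seq P * nat) : exists a,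
    (forall p, p \in i.1 -> `|pr a p| < (i.2.+1%:R : K)^-1) /\ ~ `|psi a| < 1.
  apply: contrapT => no_a; apply: no_bound; exists i.1, i.2 => a a_small.
  by apply: contrapT => psi_a; apply: no_a; exists a.
have [f f_bad] := choice bad.
have [_ le_refl _ _] := subset_leq_directed P.
have f_cvg0 : wconv pr (fun i j => {subset i.1 <= j.1} /\ (i.2 <= j.2)%N) f 0.
  move=> p e e_gt0; have [n ne] := exists_invSn_lt e_gt0.
  exists ([:: p], n) => i [/(_ p (mem_head _ _)) p_i n_i].
  rewrite pr0l subr0; have [+ _] := f_bad i => /(_ p p_i) /lt_le_trans -> //.
  by apply: le_trans (ltW ne); rewrite lef_pV2 ?posrE ?ltr0Sn // ler_nat ltnS.
have := psi_cont _ _ f 0 (subset_leq_directed P) f_cvg0.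
rewrite (scalar_linear0 psi_lin) => /(_ 1 ltr01)[i0 psi_small].
by have [_] := f_bad i0; apply; rewrite -[psi _]subr0; apply/psi_small/le_refl.
Qed.

Lemma wstar_continuous_predual_rep psi : scalar_linear psi ->
  wstar_continuous_functional psi -> exists q, forall a, psi a = pr a q.
Proof.
move=> psi_lin psi_cont.
have [L [n L_bound]] := wstar_continuous_local_bound psi_lin psi_cont.
apply: (predual_rep_of_kernel (L := L)) => // a a_L.
apply: contrapT => /eqP psi_a_neq0.
suff : `|psi ((psi a)^-1 *: a)| < 1.
  by rewrite (scalar_linearZ psi_lin) mulVf // normr1 ltxx.
by apply: L_bound => p p_L; rewrite prZl a_L // mulr0 normr0 invr_gt0 ltr0Sn.
Qed.

Lemma predual_unit_functional a0 : a0 != 0 ->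
  exists f : A -> K, bdd_lin_fun f /\ f a0 = 1.
Proof.
move=> a0_neq0; have [_ _ _ norming _] := prP.
have [|p0 [_]] := norming a0 `|a0|; first by rewrite normr_gt0.
rewrite subrr normr_gt0 => a0p0_neq0.
exists (fun a => pr a p0 / pr a0 p0); split; last exact: divff.
split=> [k a b|]; first by rewrite pr_linl mulrDl mulrA.
exists (`|p0| / `|pr a0 p0|) => a.
rewrite normrM normfV mulrAC ler_pM2r ?invr_gt0 ?normr_gt0 //.
by rewrite mulrC norm_pr_le.
Qed.

Lemma bilin_bounded_by_norm (F : A -> A -> K) M :
  bilin_bounded_by F M -> bilin_bounded_by F `|M|.
Proof. by move=> FM b c; rewrite -mulrA ler_normM_bound ?mulr_ge0 // mulrA. Qed.

Lemma bilin_bounded_by_lact a F M : bilin_bounded_by F M ->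
  bilin_bounded_by (lact_E mul a F) (`|M| * `|a|).
Proof.
move=> /bilin_bounded_by_norm FM b c; apply: le_trans (FM b (mul c a)) _.
have -> : `|M| * `|a| * `|b| * `|c| = `|M| * `|b| * (`|c| * `|a|) by ring.
by rewrite ler_wpM2l ?mulr_ge0 ?norm_mul_le.
Qed.

Lemma bilin_bounded_by_ract a F M : bilin_bounded_by F M ->
  bilin_bounded_by (ract_E mul F a) (`|M| * `|a|).
Proof.
move=> /bilin_bounded_by_norm FM b c; apply: le_trans (FM (mul a b) c) _.
have -> : `|M| * `|a| * `|b| * `|c| = `|M| * (`|a| * `|b|) * `|c| by ring.
by rewrite ler_wpM2r // ler_wpM2l ?norm_mul_le.
Qed.

Lemma tpi_cvg xs ys : proj_tensor xs ys -> cvgn (series (fun n => mul (xs n) (ys n))).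
Proof.
move=> xy_pt; apply: (series_cvg_dominated (c := 1)) xy_pt _ => //.
by move=> n; rewrite mul1r norm_mul_le.
Qed.

Section Derivation.
Variable D : A -> A -> K.
Hypothesis D_der : derivation_to_dual mul D.
Hypothesis jD_cont : jD_wstar_cont pr mul D.

Lemma D_bdd a : bdd_lin_fun (D a).
Proof. by case: D_der. Qed.

Lemma D_linr a : scalar_linear (D a).
Proof. exact: proj1 (D_bdd a). Qed.

Lemma D_linl (k : K) a b x : D (k *: a + b) x = k * D a x + D b x.
Proof. by case: D_der. Qed.

Lemma D_mul a b x : D (mul a b) x = D a (mul b x) + D b (mul x a).
Proof. by case: D_der. Qed.

Lemma D_bound : exists C, 0 <= C /\ forall a x, `|D a x| <= C * `|a| * `|x|.
Proof.
case: D_der => _ _ [C DC] _; exists `|C|; split => // a x.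
by rewrite -mulrA ler_normM_bound ?mulr_ge0 // mulrA.
Qed.

(* [dform x] is the form F_x above, and [prform p] is pi^*(p) for p in A_*. *)
Definition dform (x : A) : A -> A -> K := fun b c => D b (mul c x).
Definition prform (p : P) : A -> A -> K := fun b c => pr (mul b c) p.

Lemma dform_bound : exists C, 0 <= C /\ forall x, bilin_bounded_by (dform x) (C * `|x|).
Proof.
have [C [C_ge0 DC]] := D_bound; exists C; split => // x b c.
apply: le_trans (DC _ _) _.
have -> : C * `|x| * `|b| * `|c| = C * `|b| * (`|c| * `|x|) by ring.
by rewrite ler_wpM2l ?mulr_ge0 ?norm_mul_le.
Qed.

Lemma bdd_bilin_dform x : bdd_bilin (dform x).
Proof.
have [C [_ dC]] := dform_bound.
split=> [k a b c|k a b c|]; last by exists (C * `|x|).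
- exact: D_linl.
- by rewrite /dform mul_linl D_linr.
Qed.

Lemma bdd_bilin_prform p : bdd_bilin (prform p).
Proof.
split=> [k a b c|k a b c|]; rewrite /prform ?mul_linl ?mul_linr ?pr_linl //.
exists `|p| => b c; apply: le_trans (norm_pr_le _ _) _.
by rewrite -mulrA mulrC ler_wpM2l ?norm_mul_le.
Qed.

Lemma bdd_lin_fun_Phi_dform Phi :
  bdd_lin_funE Phi -> bdd_lin_fun (fun v => Phi (dform v)).
Proof.
move=> [Phi_lin [C' [_ Phi_bound]]]; have [C [_ dC]] := dform_bound.
split=> [k v w|].
  have -> : dform (k *: v + w) = fun b c => k * dform v b c + dform w b c.
    by apply/funext => b; apply/funext => c; rewrite /dform mul_linr D_linr.
  by rewrite Phi_lin //; apply: bdd_bilin_dform.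
by exists (C' * C) => v; rewrite -mulrA Phi_bound //; apply: bdd_bilin_dform.
Qed.

Lemma Phi_prform_rep Phi :
  bdd_lin_funE Phi -> exists z, forall p, Phi (prform p) = pr z p.
Proof.
move=> [Phi_lin [C' [_ Phi_bound]]]; have [_ _ _ _ pr_onto] := prP.
have [|z Phi_z] := pr_onto (fun p => Phi (prform p)); last first.
  by exists z => p; rewrite Phi_z.
split=> [k p q|].
  have -> : prform (k *: p + q) = fun b c => k * prform p b c + prform q b c.
    by apply/funext => b; apply/funext => c; rewrite /prform pr_linr.
  by rewrite Phi_lin //; apply: bdd_bilin_prform.
exists C' => p; apply: Phi_bound; first exact: bdd_bilin_prform.
move=> b c; apply: le_trans (norm_pr_le _ _) _.
by rewrite -mulrA mulrC ler_wpM2l ?norm_mul_le.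
Qed.

Lemma lact_E_dform w x : lact_E mul w (dform x) = dform (mul w x).
Proof. by apply/funext => b; apply/funext => c; rewrite /lact_E /dform mulA. Qed.

Lemma D_mul_rep w x : sigmawcA pr mul x -> exists q, forall v, D w (mul v x) = pr v q.
Proof.
move=> x_wc; apply: wstar_continuous_predual_rep => [k v v'|I le u a le_directed ua].
  by rewrite mul_linl D_linr.
by have [] := x_wc I le u a le_directed ua (D w) (D_bdd w).
Qed.

Lemma ract_E_dform w x Phi z : sigmawcA pr mul x -> bdd_lin_funE Phi ->
  (forall p, Phi (prform p) = pr z p) ->
  Phi (ract_E mul (dform x) w) = D w (mul z x) + Phi (dform (mul x w)).
Proof.
move=> x_wc [Phi_lin _] Phi_z; have [q q_rep] := D_mul_rep w x_wc.
have -> : ract_E mul (dform x) w = fun b c => 1 * prform q b c + dform (mul x w) b c.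
  apply/funext => b; apply/funext => c.
  by rewrite /ract_E /dform /prform D_mul mul1r -q_rep !mulA.
rewrite Phi_lin ?mul1r ?Phi_z -?q_rep //.
- exact: bdd_bilin_prform.
- exact: bdd_bilin_dform.
Qed.

Lemma sigmawcE_dform x : sigmawcA pr mul x -> sigmawcE pr mul (dform x).
Proof.
move=> x_wc; split=> [|I le u a le_directed ua Phi Phi_bdd].
  exact: bdd_bilin_dform.
have [ux_cvg xu_cvg] :=
  x_wc I le u a le_directed ua _ (bdd_lin_fun_Phi_dform Phi_bdd).
have [z Phi_z] := Phi_prform_rep Phi_bdd.
split.
  by rewrite lact_E_dform; apply: eq_net_conv ux_cvg => i; rewrite lact_E_dform.
rewrite (ract_E_dform _ x_wc Phi_bdd Phi_z).
apply: eq_net_conv => [i|]; first by rewrite (ract_E_dform _ x_wc Phi_bdd Phi_z).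
by apply: net_convD => //; apply: jD_cont => //; apply: sigmawcA_mul.
Qed.

Section NontrivialAlgebra.
Variable a0 : A.
Hypothesis a0_neq0 : a0 != 0.

Lemma tpair_cvg (F : A -> A -> K) M xs ys :
  bilin_bounded_by F M -> proj_tensor xs ys ->
  cvgn (series ((fun n => F (xs n) (ys n)) : nat -> K^o)).
Proof.
move=> /bilin_bounded_by_norm FM xy_pt.
have [f [f_bdd fa0]] := predual_unit_functional a0_neq0.
apply: (scalar_series_cvg_dominated (c := `|M|) f_bdd fa0) xy_pt _ => // n.
by rewrite mulrA FM.
Qed.

Lemma tpair_dform_commutator x a xs ys : proj_tensor xs ys ->
  tpair (dform x) (fun n => mul a (xs n)) ys - tpair (dform x) xs (fun n => mul (ys n) a)
  = D a (mul (tpi mul xs ys) x).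
Proof.
move=> xy_pt; have [C [_ dC]] := dform_bound.
have l_cvg := tpair_cvg (bilin_bounded_by_ract a (dC x)) xy_pt.
have r_cvg := tpair_cvg (bilin_bounded_by_lact a (dC x)) xy_pt.
have T_bdd : bdd_lin_fun (fun v => D a (mul v x)).
  have -> : (fun v => D a (mul v x)) = (fun v => D a (mul x v)).
    by apply/funext => v; rewrite mulC.
  exact: bdd_lin_fun_mul (D_bdd a).
rewrite /tpair; apply: (cvg_unique (@norm_hausdorff _ K^o) (cvgB l_cvg r_cvg)).
have -> : (series (fun n => ract_E mul (dform x) a (xs n) (ys n) : K^o) -
           series (fun n => lact_E mul a (dform x) (xs n) (ys n)))%R =
          (fun n => D a (mul (series (fun k => mul (xs k) (ys k)) n) x)).
  rewrite -seriesN -seriesD; apply/funext => n.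
  rewrite (scalar_linear_series (proj1 T_bdd)); congr (series _ n).
  apply/funext => k; rewrite !fctE.
  by rewrite /ract_E /lact_E /dform D_mul (mulAC (ys k) a) addrK mulA.
exact: bdd_lin_fun_cvg T_bdd (tpi_cvg xy_pt).
Qed.

Section PseudoConnesNet.
Variables (I : Type) (le : I -> I -> Prop) (xs ys : I -> nat -> A).
Hypothesis le_directed : directed le.
Hypothesis xy_pt : forall i, proj_tensor (xs i) (ys i).
Hypothesis xy_central : forall (a : A) (F : A -> A -> K), sigmawcE pr mul F ->
  net_conv le (fun i => tpair F (fun n => mul a (xs i n)) (ys i)
                      - tpair F (xs i) (fun n => mul (ys i n) a)) 0.
Hypothesis xy_unit :
  forall a : A, wconv pr le (fun i => mul a (tpi mul (xs i) (ys i))) a.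

Lemma D_tpi_net_conv0 a x : sigmawcA pr mul x ->
  net_conv le (fun i => D a (mul (tpi mul (xs i) (ys i)) x)) 0.
Proof.
move=> x_wc; apply: eq_net_conv (xy_central a (sigmawcE_dform x_wc)) => i.
exact: tpair_dform_commutator.
Qed.

Lemma D_mul_sigmawc_eq0 b c x : sigmawcA pr mul x -> D b (mul c x) = 0.
Proof.
move=> x_wc.
have [cpi_x_cvg _] := x_wc I le _ _ le_directed (xy_unit c) (D b) (D_bdd b).
apply: (net_conv_unique le_directed cpi_x_cvg).
apply: eq_net_conv (D_tpi_net_conv0 b (sigmawcA_mul c x_wc)) => i /=.
by rewrite -mulA (mulC (tpi _ _ _) c).
Qed.

Lemma D_sigmawc_eq0 b x : sigmawcA pr mul x -> D b x = 0.
Proof.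
move=> x_wc; apply: (net_conv_unique le_directed (jD_cont le_directed (xy_unit b) x_wc)).
apply: eq_net_conv (net_conv_cst le_directed 0) => i.
by rewrite D_mul (mulC x b) !D_mul_sigmawc_eq0 ?addr0.
Qed.

End PseudoConnesNet.
End NontrivialAlgebra.

Lemma pseudo_connes_D_sigmawc_eq0 b x : pseudo_connes_amenable pr mul ->
  sigmawcA pr mul x -> D b x = 0.
Proof.
move=> [I [le [xs [ys [le_directed xy_pt xy_central xy_unit]]]]] x_wc.
have [->|x_neq0] := eqVneq x 0; first exact: scalar_linear0 (D_linr b).
exact: (D_sigmawc_eq0 x_neq0 le_directed xy_pt xy_central xy_unit b x_wc).
Qed.

End Derivation.
End DualBanachAlgebra.

Theorem corollary3p12 (R : realType) (A P : completeNormedModType R[i])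
    (pr : A -> P -> R[i]) (mul : A -> A -> A) :
  dual_banach_algebra pr mul ->
  commutative_alg mul ->
  pseudo_connes_amenable pr mul ->
  weakly_connes_amenable pr mul.
Proof.
move=> [mulP prP _] mulC pca D D_der jD_cont; exists (fun=> 0); split.
- by move=> k x y _ _; rewrite mulr0 addr0.
- by exists 0 => x _; rewrite normr0 mul0r.
- move=> a x x_wc; rewrite subrr.
  exact: (pseudo_connes_D_sigmawc_eq0 mulP prP mulC D_der jD_cont a pca x_wc).
Qed.
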